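(* Let $N,K,T$ be positive integers, $\mathcal{N}=\{1,\dots,N\}$, $\mathcal{K}=\{1,\dots,K\}$, $\mathcal{T}=\{1,\dots,T\}$. For each $(n,k,t)\in\mathcal{N}\times\mathcal{K}\times\mathcal{T}$ let $h_n[k,t]$ be a random variable with Gamma distribution of shape $\kappa_n[k,t]>0$ and scale $g_n[k,t]/\kappa_n[k,t]$, where $g_n[k,t]>0$. Let $\delta^2>0$, $\bar p>0$, $\bar\upsilon>0$, let $\bar\tau$ be a positive integer, and let $\varepsilon_\theta$ be a positive integer. A policy $\boldsymbol{\pi}=(\boldsymbol{\mathcal{A}},\boldsymbol{\mathcal{P}})$ consists of $a_n[k,t]\in\{0,1\}$ and $p_n[k,t]\ge 0$ for all $(n,k,t)$ such that $\sum_{n\in\mathcal{N}}a_n[k,t]\le 1$ for all $k,t$ and $\sum_{n\in\mathcal{N}}\sum_{k\in\mathcal{K}}p_n[k,t]\le\bar p$ for all $t$. Put $c_n[k,t]=\log_2\!\big(1+p_n[k,t]h_n[k,t]/\delta^2\big)$, $\upsilon(t',t'')=\sum_{n\in\mathcal{N}}\sum_{k\in\mathcal{K}}\sum_{t=t'}^{t''-1}c_n[k,t]a_n[k,t]$, $\theta(\boldsymbol{\pi})=\max_{n\in\mathcal{N},t\in\mathcal{T}}\sum_{k\in\mathcal{K}}a_n[k,t]$ and $E(\boldsymbol{\pi})=\sum_{n,k,t}a_n[k,t]p_n[k,t]$. A sampling sequence is $\mathbf{t}=(t_1,\dots,t_I)$ (with $I$ a free positive integer) together with $t_0=1$ and $t_{I+1}=T+1$,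 such that $t_0<t_1<\dots<t_I\le T$ and $1\le t_{i+1}-t_i\le\bar\tau$ for all $i\in\mathcal{I}=\{0,1,\dots,I\}$; let $\Upsilon$ be the set of such sequences. Consider $$\mathscr{P}3:\ \min_{\boldsymbol{\mathcal{A}},\boldsymbol{\mathcal{P}},\mathbf{t}}\ E(\boldsymbol{\pi})\ \text{ s.t. }\ \mathbb{E}\{\upsilon(t_i,t_{i+1})\}\ge\bar\upsilon\ \forall i\in\mathcal{I},\ \ \theta(\boldsymbol{\pi})\le\varepsilon_\theta,\ \ \boldsymbol{\pi}\text{ a policy},\ \mathbf{t}\in\Upsilon,$$ where the expectation is over the channels $h_n[k,t]$. For integers $1\le t'<t''\le T+1$ let $\mathcal{T}(t',t'')=\{t',\dots,t''-1\}$ and let $E^*(t',t'')$ be the optimal value (equal to $+\infty$ if infeasible) of the inner problem $$\mathscr{P}\text{3-2}:\ \min\ \sum_{n\in\mathcal{N},k\in\mathcal{K},t\in\mathcal{T}(t',t'')}a_n[k,t]p_n[k,t]$$ over $a_n[k,t]\in\{0,1\}$, $p_n[k,t]\ge0$ for $t\in\mathcal{T}(t',t'')$, subject to $\mathbb{E}\{\upsilon(t',t'')\}\ge\bar\upsilon$, $\sum_{k}a_n[k,t]\le\varepsilon_\theta$ for all $n$ and $t\in\mathcal{T}(t',t'')$, $\sum_n a_n[k,t]\le 1$ for all $k$ and $t\in\mathcal{T}(t',t'')$, and $\sum_{n,k}p_n[k,t]\le\bar p$ for all $t\in\mathcal{T}(t',t'')$. Then $\mathscr{P}3$ is equivalent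 to the outer problem $$\mathscr{P}\text{3-1}:\ \min_{\mathbf{t}\in\Upsilon}\ \sum_{i\in\mathcal{I}}E^*(t_i,t_{i+1}),$$ i.e., the optimal values coincide, and an optimal solution of $\mathscr{P}3$ is obtained from an optimal $\mathbf{t}$ of $\mathscr{P}\text{3-1}$ together with optimal solutions of $\mathscr{P}\text{3-2}$ on each interval $\mathcal{T}(t_i,t_{i+1})$.
   Context: This models a UAV sending status updates to $N$ base stations over $K$ resource blocks and $T$ slots; $a_n[k,t]$ indicates that resource block $k$ in slot $t$ is used for the link to base station $n$, $p_n[k,t]$ is the transmit power. *)

From HB Require Import structures.
From mathcomp Require Import all_boot all_order all_algebra.
From mathcomp Require Import all_classical all_reals all_analysis.
Set Implicit Arguments. Unset Strict Implicit. Unset Printing Implicit Defensive.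
Import Order.TTheory GRing.Theory Num.Theory.
Import numFieldNormedType.Exports.
Local Open Scope classical_set_scope.
Local Open Scope ring_scope.

Definition gammaR (R : realType) (k : R) : R :=
  fine (\int[@lebesgue_measure R]_(x in `]0%R, +oo[)
          ((x `^ (k - 1)) * expR (- x))%:E)%E.

Definition gamma_pdf (R : realType) (k s : R) (x : R) : R :=
  if 0 < x then x `^ (k - 1) * expR (- x / s) / (gammaR k * s `^ k) else 0.

Definition gamma_distributed (R : realType) (d : measure_display)
  (Omega : measurableType d) (P : probability Omega R) (X : {RV P >-> R})
  (k s : R) : Prop :=
  forall A : set R, measurable A ->
    P (X @^-1` A) = (\int[@lebesgue_measure R]_(x in A) (gamma_pdf k s x)%:E)%E.

Section P3.
Variables (R : realType) (d : measure_display) (Omega : measurableType d)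
  (P : probability Omega R) (N K T : nat).

Notation alloc := ('I_N -> 'I_K -> 'I_T -> bool).
Notation power := ('I_N -> 'I_K -> 'I_T -> R).
Notation chan := ('I_N -> 'I_K -> 'I_T -> {RV P >-> R}).

(* Convention: the ordinal t : 'I_T stands for time slot t+1 in {1,...,T};
   t' <= t.+1 < t'' means slot t+1 lies in T(t',t'') = {t',...,t''-1}. *)
Definition in_slots (t1 t2 : nat) (t : 'I_T) : bool := (t1 <= t.+1 < t2)%N.

Definition capa (delta2 : R) (p : power) (h : chan) n k t (w : Omega) : R :=
  ln (1 + p n k t * h n k t w / delta2) / ln 2.

Definition upsilon (delta2 : R) (a : alloc) (p : power) (h : chan)
  (t1 t2 : nat) (w : Omega) : R :=
  \sum_(n < N) \sum_(k < K) \sum_(t < T | in_slots t1 t2 t)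
     capa delta2 p h n k t w * (a n k t)%:R.

Definition Eupsilon (delta2 : R) (a : alloc) (p : power) (h : chan)
  (t1 t2 : nat) : \bar R :=
  (\int[P]_w (upsilon delta2 a p h t1 t2 w)%:E)%E.

Definition theta (a : alloc) : nat :=
  \max_(n < N) \max_(t < T) \sum_(k < K) (a n k t : nat).

Definition energy (a : alloc) (p : power) : R :=
  \sum_(n < N) \sum_(k < K) \sum_(t < T) (a n k t)%:R * p n k t.

Definition is_policy (pbar : R) (a : alloc) (p : power) : Prop :=
  (forall n k t, 0 <= p n k t) /\
  (forall k t, (\sum_(n < N) (a n k t : nat) <= 1)%N) /\
  (forall t, \sum_(n < N) \sum_(k < K) p n k t <= pbar).

Definition in_Upsilon (taubar : nat) (I : nat) (ts : nat -> nat) : Prop :=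
  (0 < I)%N /\ ts 0%N = 1%N /\ ts I.+1 = T.+1 /\
  forall i, (i <= I)%N -> (ts i < ts i.+1 <= ts i + taubar)%N.

Definition P3_feasible (delta2 pbar ubar : R) (taubar eps : nat) (h : chan)
  (a : alloc) (p : power) (I : nat) (ts : nat -> nat) : Prop :=
  [/\ forall i, (i <= I)%N -> (ubar%:E <= Eupsilon delta2 a p h (ts i) (ts i.+1))%E,
      (theta a <= eps)%N,
      is_policy pbar a p &
      in_Upsilon taubar I ts].

Definition P3_value (delta2 pbar ubar : R) (taubar eps : nat) (h : chan)
  : \bar R :=
  ereal_inf [set e | exists a p I ts,
    P3_feasible delta2 pbar ubar taubar eps h a p I ts /\ e = (energy a p)%:E].

Definition energy_on (t1 t2 : nat) (a : alloc) (p : power) : R :=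
  \sum_(n < N) \sum_(k < K) \sum_(t < T | in_slots t1 t2 t) (a n k t)%:R * p n k t.

(* feasibility for the inner problem P3-2 on T(t',t''); only the variables with
   t in T(t',t'') matter *)
Definition P32_feasible (delta2 pbar ubar : R) (eps : nat) (h : chan)
  (t1 t2 : nat) (a : alloc) (p : power) : Prop :=
  [/\ forall n k t, in_slots t1 t2 t -> 0 <= p n k t,
      (ubar%:E <= Eupsilon delta2 a p h t1 t2)%E,
      forall n t, in_slots t1 t2 t -> (\sum_(k < K) (a n k t : nat) <= eps)%N,
      forall k t, in_slots t1 t2 t -> (\sum_(n < N) (a n k t : nat) <= 1)%N &
      forall t, in_slots t1 t2 t -> \sum_(n < N) \sum_(k < K) p n k t <= pbar].

Definition Estar (delta2 pbar ubar : R) (eps : nat) (h : chan) (t1 t2 : nat)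
  : \bar R :=
  ereal_inf [set e | exists a p,
    P32_feasible delta2 pbar ubar eps h t1 t2 a p /\ e = (energy_on t1 t2 a p)%:E].

Definition P31_objective (delta2 pbar ubar : R) (eps : nat) (h : chan)
  (I : nat) (ts : nat -> nat) : \bar R :=
  (\sum_(i < I.+1) Estar delta2 pbar ubar eps h (ts i) (ts i.+1))%E.

Definition P31_value (delta2 pbar ubar : R) (taubar eps : nat) (h : chan)
  : \bar R :=
  ereal_inf [set e | exists I ts,
    in_Upsilon taubar I ts /\ e = P31_objective delta2 pbar ubar eps h I ts].

Definition glue_alloc (I : nat) (ts : nat -> nat) (sa : nat -> alloc) : alloc :=
  fun n k t => [exists i : 'I_I.+1, in_slots (ts i) (ts i.+1) t && sa i n k t].

Definition glue_power (I : nat) (ts : nat -> nat) (sp : nat -> power) : power :=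
  fun n k t => \sum_(i < I.+1) (if in_slots (ts i) (ts i.+1) t then sp i n k t else 0).

End P3.

From HB Require Import structures.
From mathcomp Require Import all_boot all_order all_algebra.
From mathcomp Require Import all_classical all_reals all_analysis.
Import Order.TTheory GRing.Theory Num.Theory.
Local Open Scope classical_set_scope.
Local Open Scope ring_scope.

(* The sampling intervals T(t_i, t_(i+1)) partition the slots {1, ..., T}, and
   every constraint of P3 concerns a single slot or a single interval.  Hence a
   feasible policy restricts to a feasible solution of P3-2 on each interval,
   with total energy the sum of the interval energies; conversely, solutions of
   P3-2 on the intervals glue into a feasible policy whose energy is the sum of
   theirs.  Taking infima (with slack e/(I+1) per interval when all E* are
   finite) identifies the two optimal values. *)

Section SlotPartition.
Context {T I : nat} {ts : nat -> nat}.
Hypotheses (ts0 : ts 0 = 1%N) (tsI : ts I.+1 = T.+1)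
  (ts_step : forall i, (i <= I)%N -> (ts i <= ts i.+1)%N).

Lemma ts_homo_in : {in [pred i | i <= I.+1] &, {homo ts : i j / i <= j}}%N.
Proof.
apply: homo_leq_in => //; first exact: leq_trans.
- by move=> i j _ /= jI k /andP[_ kj]; rewrite inE (leq_trans (ltnW kj)).
- by move=> i _ /=; exact: ts_step.
Qed.

Lemma in_slots_exists (t : 'I_T) : exists i : 'I_I.+1, in_slots (ts i) (ts i.+1) t.
Proof.
suff [i iI ti] : exists2 i, (i < I.+1)%N & in_slots (ts i) (ts i.+1) t.
  by exists (Ordinal iI).
have : (t.+1 < ts I.+1)%N by rewrite tsI ltnS.
elim: I.+1 => [|m IHm] tm; first by rewrite ts0 ltnS ltn0 in tm.
case: (ltnP t.+1 (ts m)) => [/IHm [i im ti]|mt]; first by exists i; rewrite // ltnW.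
by exists m; rewrite // /in_slots mt.
Qed.

Lemma in_slots_inj {t : 'I_T} {i j : 'I_I.+1} :
  in_slots (ts i) (ts i.+1) t -> in_slots (ts j) (ts j.+1) t -> i = j.
Proof.
wlog ij : i j / (i <= j)%N.
  by move=> wlog ti tj; case: (leqP i j) => [|/ltnW] ij; [|apply/esym]; apply: wlog.
rewrite /in_slots => /andP[_ ti] /andP[tj _]; apply: val_inj => /=.
apply/eqP; rewrite eqn_leq ij leqNgt /=; apply/negP => lt_ij.
have ts_ij := ts_homo_in i.+1 j (ltn_ord i) (ltnW (ltn_ord j)) lt_ij.
by have := leq_trans (leq_trans ti ts_ij) tj; rewrite ltnn.
Qed.

Lemma sum_by_intervals (V : nmodType) (f : 'I_T -> V) :
  \sum_(t < T) f t = \sum_(i < I.+1) \sum_(t < T | in_slots (ts i) (ts i.+1) t) f t.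
Proof.
under [RHS]eq_bigr do rewrite big_mkcond.
rewrite exchange_big /=; apply: eq_bigr => t _.
have [i ti] := in_slots_exists t.
rewrite (bigD1 i) //= ti big1 ?addr0 // => j ji.
by case: ifP => // tj; rewrite (in_slots_inj tj ti) eqxx in ji.
Qed.

Lemma glue_alloc_at {N K : nat} {sa : nat -> 'I_N -> 'I_K -> 'I_T -> bool}
    {i : 'I_I.+1} {n k} {t : 'I_T} :
  in_slots (ts i) (ts i.+1) t -> glue_alloc I ts sa n k t = sa i n k t.
Proof.
move=> ti; apply/existsP/idP => [[j /andP[tj]]|sai]; first by rewrite (in_slots_inj tj ti).
by exists i; rewrite ti.
Qed.

Lemma glue_power_at {R : realType} {N K : nat} {sp : nat -> 'I_N -> 'I_K -> 'I_T -> R}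
    {i : 'I_I.+1} {n k} {t : 'I_T} :
  in_slots (ts i) (ts i.+1) t -> glue_power I ts sp n k t = sp i n k t.
Proof.
move=> ti; rewrite /glue_power (bigD1 i) //= ti big1 ?addr0 // => j ji.
by case: ifP => // tj; rewrite (in_slots_inj tj ti) eqxx in ji.
Qed.

End SlotPartition.

Lemma in_Upsilon_steps {T taubar I : nat} {ts : nat -> nat} :
  in_Upsilon T taubar I ts ->
  [/\ ts 0 = 1%N, ts I.+1 = T.+1 & forall i, (i <= I)%N -> (ts i <= ts i.+1)%N].
Proof.
by case=> _ [ts0 [tsI steps]]; split=> // i /steps /andP[/ltnW].
Qed.

Section EnergyMinimisation.
Context {R : realType} {d : measure_display} {Omega : measurableType d}
  {P : probability Omega R} {N K T : nat} {h : 'I_N -> 'I_K -> 'I_T -> {RV P >-> R}}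
  {delta2 pbar ubar : R} {taubar eps : nat}.

Local Notation alloc := ('I_N -> 'I_K -> 'I_T -> bool).
Local Notation power := ('I_N -> 'I_K -> 'I_T -> R).
Local Notation feasible3 := (P3_feasible delta2 pbar ubar taubar eps h).
Local Notation feasible32 := (P32_feasible delta2 pbar ubar eps h).
Local Notation Emin := (Estar delta2 pbar ubar eps h).
Local Notation objective31 := (P31_objective delta2 pbar ubar eps h).
Local Notation value3 := (P3_value delta2 pbar ubar taubar eps h).
Local Notation value31 := (P31_value delta2 pbar ubar taubar eps h).

Lemma energy_on_ge0 t1 t2 (a : alloc) (p : power) :
  (forall n k t, in_slots t1 t2 t -> 0 <= p n k t) -> 0 <= energy_on t1 t2 a p.
Proof.
move=> p_ge0; do 3!(apply: sumr_ge0 => ? ?).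
by rewrite mulr_ge0 ?p_ge0.
Qed.

Lemma Estar_ge0 t1 t2 : (0 <= Emin t1 t2)%E.
Proof. by apply/ereal_infP => _ [a [p [[p_ge0 _ _ _ _] ->]]]; rewrite lee_fin energy_on_ge0. Qed.

Lemma P3_feasible_interval a p I ts i :
  feasible3 a p I ts -> (i <= I)%N -> feasible32 (ts i) (ts i.+1) a p.
Proof.
move=> [ups_ge theta_le [p_ge0 [a_excl p_budget]] _] iI.
split=> [n k t _||n t _|k t _|t _]; [exact: p_ge0|exact: ups_ge| |exact: a_excl|exact: p_budget].
apply: leq_trans theta_le; rewrite /theta.
by apply: leq_trans (leq_bigmax n); apply: leq_bigmax.
Qed.

Section Gluing.
Context {I : nat} {ts : nat -> nat}.
Hypothesis ts_Upsilon : in_Upsilon T taubar I ts.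

Let ts0 : ts 0 = 1%N. Proof. by case: (in_Upsilon_steps ts_Upsilon). Qed.
Let tsI : ts I.+1 = T.+1. Proof. by case: (in_Upsilon_steps ts_Upsilon). Qed.
Let ts_step i : (i <= I)%N -> (ts i <= ts i.+1)%N.
Proof. by case: (in_Upsilon_steps ts_Upsilon) => _ _; apply. Qed.

Lemma energy_by_intervals (a : alloc) (p : power) :
  energy a p = \sum_(i < I.+1) energy_on (ts i) (ts i.+1) a p.
Proof.
rewrite /energy /energy_on [RHS]exchange_big; apply: eq_bigr => n _.
rewrite [RHS]exchange_big; apply: eq_bigr => k _.
exact: sum_by_intervals.
Qed.

Variables (sa : nat -> alloc) (sp : nat -> power).
Local Notation a := (glue_alloc I ts sa).
Local Notation p := (glue_power I ts sp).

Lemma glue_energy :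
  energy a p = \sum_(i < I.+1) energy_on (ts i) (ts i.+1) (sa i) (sp i).
Proof.
rewrite energy_by_intervals; apply: eq_bigr => i _.
apply: eq_bigr => n _; apply: eq_bigr => k _; apply: eq_bigr => t ti.
by rewrite (glue_alloc_at ts_step ti) (glue_power_at ts_step ti).
Qed.

Lemma Eupsilon_glue (i : 'I_I.+1) :
  Eupsilon delta2 a p h (ts i) (ts i.+1) = Eupsilon delta2 (sa i) (sp i) h (ts i) (ts i.+1).
Proof.
congr integral; apply: funext => w; congr EFin.
apply: eq_bigr => n _; apply: eq_bigr => k _; apply: eq_bigr => t ti.
by rewrite /capa (glue_alloc_at ts_step ti) (glue_power_at ts_step ti).
Qed.

Lemma glue_feasible :
  (forall i : 'I_I.+1, feasible32 (ts i) (ts i.+1) (sa i) (sp i)) -> feasible3 a p I ts.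
Proof.
move=> sol; split=> //.
- move=> i iI; pose o := Ordinal (iI : (i < I.+1)%N).
  by rewrite -[i]/(nat_of_ord o) Eupsilon_glue; case: (sol o).
- apply/bigmax_leqP => n _; apply/bigmax_leqP => t _.
  have [i ti] := in_slots_exists ts0 tsI t; have [_ _ a_eps _ _] := sol i.
  under eq_bigr do rewrite (glue_alloc_at ts_step ti).
  exact: a_eps.
split; [|split] => [n k t|k t|t]; have [i ti] := in_slots_exists ts0 tsI t;
  have [p_ge0 _ _ a_excl p_budget] := sol i.
- by rewrite (glue_power_at ts_step ti) p_ge0.
- by under eq_bigr do rewrite (glue_alloc_at ts_step ti); exact: a_excl.
- under eq_bigr do under eq_bigr do rewrite (glue_power_at ts_step ti).
  exact: p_budget.
Qed.

Lemma P3_value_le_glue :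
  (forall i : 'I_I.+1, feasible32 (ts i) (ts i.+1) (sa i) (sp i)) ->
  (value3 <= (\sum_(i < I.+1) energy_on (ts i) (ts i.+1) (sa i) (sp i))%:E)%E.
Proof.
move=> sol; rewrite -glue_energy; apply: ereal_inf_lbound.
by exists a, p, I, ts; split=> //; exact: glue_feasible.
Qed.

End Gluing.

Lemma P31_value_le_P3_value : (value31 <= value3)%E.
Proof.
apply/ereal_infP => _ [a [p [I [ts [feas ->]]]]].
have [_ _ _ ts_Ups] := feas.
apply: (@le_trans _ _ (objective31 I ts)); first by apply: ereal_inf_lbound; exists I, ts.
rewrite /P31_objective (energy_by_intervals ts_Ups) -sumEFin.
apply: lee_sum => i _; apply: ereal_inf_lbound; exists a, p; split=> //.
exact: P3_feasible_interval feas (ltn_ord i).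
Qed.

Lemma P31_objective_pinfty {I} {ts : nat -> nat} {i : 'I_I.+1} :
  Emin (ts i) (ts i.+1) = +oo%E -> objective31 I ts = +oo%E.
Proof.
move=> Ei; rewrite /P31_objective (bigD1 i) //= Ei addye //.
by rewrite gt_eqF // (lt_le_trans ltNy0) // sume_ge0 // => j _; exact: Estar_ge0.
Qed.

Lemma Estar_adherent {t1 t2 c} : 0 < c -> Emin t1 t2 \is a fin_num ->
  exists a p, feasible32 t1 t2 a p /\ energy_on t1 t2 a p <= fine (Emin t1 t2) + c.
Proof.
move=> c0 Efin; have [_ [a [p [feas ->]]] lt_c] := lb_ereal_inf_adherent c0 Efin.
exists a, p; split=> //; apply: ltW.
by move: lt_c; rewrite -[ereal_inf _]/(Emin t1 t2) -(fineK Efin) -EFinD lte_fin.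
Qed.

Lemma P3_value_le_objective I ts : in_Upsilon T taubar I ts -> (value3 <= objective31 I ts)%E.
Proof.
move=> ts_Ups.
have [[i Ei]|Efin] := boolp.pselect (exists i : 'I_I.+1, Emin (ts i) (ts i.+1) = +oo%E).
  by rewrite (P31_objective_pinfty Ei) leey.
have {}Efin (i : 'I_I.+1) : Emin (ts i) (ts i.+1) \is a fin_num.
  by rewrite ge0_fin_numE ?Estar_ge0 // ltey; apply/eqP => Ei; apply: Efin; exists i.
apply/lee_addgt0Pr => e e0.
have c0 : 0 < e / I.+1%:R by rewrite divr_gt0 ?ltr0n.
have /boolp.choice[ap apP] : forall i : 'I_I.+1, exists ap : alloc * power,
    feasible32 (ts i) (ts i.+1) ap.1 ap.2 /\
    energy_on (ts i) (ts i.+1) ap.1 ap.2 <= fine (Emin (ts i) (ts i.+1)) + e / I.+1%:R.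
  by move=> i; have [a [p ?]] := Estar_adherent c0 (Efin i); exists (a, p).
pose sa i := (ap (inord i)).1; pose sp i := (ap (inord i)).2.
apply: le_trans (P3_value_le_glue ts_Ups sa sp _) _.
  by move=> i; rewrite /sa /sp inord_val; exact: (apP i).1.
have -> : objective31 I ts = (\sum_(i < I.+1) fine (Emin (ts i) (ts i.+1)))%:E.
  by rewrite -sumEFin; apply: eq_bigr => i _; rewrite fineK.
have -> : e = \sum_(i < I.+1) e / I.+1%:R.
  by rewrite sumr_const card_ord -[RHS]mulr_natr divfK ?pnatr_eq0.
rewrite -EFinD lee_fin -big_split /=; apply: ler_sum => i _.
by rewrite /sa /sp inord_val; exact: (apP i).2.
Qed.

Lemma P3_value_le_P31_value : (value3 <= value31)%E.
Proof. by apply/ereal_infP => _ [I [ts [ts_Ups ->]]]; exact: P3_value_le_objective. Qed.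

End EnergyMinimisation.

Theorem theorem1 (R : realType) (d : measure_display) (Omega : measurableType d)
  (P : probability Omega R) (N K T : nat)
  (kappa g : 'I_N -> 'I_K -> 'I_T -> R)
  (h : 'I_N -> 'I_K -> 'I_T -> {RV P >-> R})
  (delta2 pbar ubar : R) (taubar eps : nat) :
  (0 < N)%N -> (0 < K)%N -> (0 < T)%N ->
  (forall n k t, 0 < kappa n k t) -> (forall n k t, 0 < g n k t) ->
  (forall n k t, gamma_distributed (h n k t) (kappa n k t) (g n k t / kappa n k t)) ->
  0 < delta2 -> 0 < pbar -> 0 < ubar -> (0 < taubar)%N -> (0 < eps)%N ->
  P3_value delta2 pbar ubar taubar eps h = P31_value delta2 pbar ubar taubar eps h /\
  forall (I : nat) (ts : nat -> nat)
         (sa : nat -> 'I_N -> 'I_K -> 'I_T -> bool)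
         (sp : nat -> 'I_N -> 'I_K -> 'I_T -> R),
    in_Upsilon T taubar I ts ->
    P31_objective delta2 pbar ubar eps h I ts = P31_value delta2 pbar ubar taubar eps h ->
    (forall i, (i <= I)%N ->
       P32_feasible delta2 pbar ubar eps h (ts i) (ts i.+1) (sa i) (sp i) /\
       (energy_on (ts i) (ts i.+1) (sa i) (sp i))%:E
         = Estar delta2 pbar ubar eps h (ts i) (ts i.+1)) ->
    P3_feasible delta2 pbar ubar taubar eps h
      (glue_alloc I ts sa) (glue_power I ts sp) I ts /\
    (energy (glue_alloc I ts sa) (glue_power I ts sp))%:E
      = P3_value delta2 pbar ubar taubar eps h.
Proof.
move=> *.
have values_eq : P3_value delta2 pbar ubar taubar eps h = P31_value delta2 pbar ubar taubar eps h.
  by apply/eqP; rewrite eq_le P3_value_le_P31_value P31_value_le_P3_value.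
split=> // I ts sa sp ts_Ups opt sol.
split; first by apply: glue_feasible => // i; case: (sol i (ltn_ord i)).
rewrite (glue_energy ts_Ups) -sumEFin values_eq -opt; apply: eq_bigr => i _.
by case: (sol i (ltn_ord i)).
Qed.
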